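(* Let $\mathbf{a},\mathbf{b}\in\mathbb{R}^n$ have strictly positive entries with $\|\mathbf{a}\|_1=\|\mathbf{b}\|_1=d$. Then the undirected bipartite product graph $G(\mathbf{a},\mathbf{b})$ is a $1/2$-expander, i.e. for every $\emptyset\subset S\subset V$, $$\frac{\delta(S)}{\min\{\operatorname{vol}(S),\operatorname{vol}(V\setminus S)\}}\ge\frac12.$$
   Context: $G(\mathbf{a},\mathbf{b})$ is the undirected weighted graph on vertex set $V=A\cup B$ with $A=\{1,\dots,n\}$, $B=\{n+1,\dots,2n\}$, in which vertex $i\in A$ and vertex $n+j\in B$ are joined by an edge of weight $\mathbf{a}(i)\mathbf{b}(j)/d$, and there are no other edges (so vertex $i\in A$ has degree $\mathbf{a}(i)$ and $n+j\in B$ has degree $\mathbf{b}(j)$). For a weighted undirected graph, $\delta(S)$ is the total weight of edges with exactly one endpoint in $S$ and $\operatorname{vol}(S)$ is the sum of weighted degrees of vertices in $S$. *)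

From mathcomp Require Import all_boot all_order all_algebra.
Set Implicit Arguments. Unset Strict Implicit. Unset Printing Implicit Defensive.
Import Order.TTheory GRing.Theory Num.Theory.
Local Open Scope ring_scope.

(* Vertex set V = A ∪ B, with A = inl 'I_n (vertices 1..n) and
   B = inr 'I_n (vertices n+1..2n). *)
Definition vert (n : nat) : finType := ('I_n + 'I_n)%type.

Definition Gw (R : fieldType) (n : nat) (a b : 'I_n -> R) (d : R)
    (u v : vert n) : R :=
  match u, v with
  | inl i, inr j => a i * b j / d
  | inr j, inl i => a i * b j / d
  | _, _ => 0
  end.

Definition wdeg (R : fieldType) (n : nat) (w : vert n -> vert n -> R)
    (u : vert n) : R := \sum_(v : vert n) w u v.

Definition vol (R : fieldType) (n : nat) (w : vert n -> vert n -> R)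
    (S : {set vert n}) : R := \sum_(u in S) wdeg w u.

Definition cut (R : fieldType) (n : nat) (w : vert n -> vert n -> R)
    (S : {set vert n}) : R := \sum_(u in S) \sum_(v in ~: S) w u v.

(* Write x and y for the a-mass of S ∩ A and the b-mass of S ∩ B.  Every
   vertex has degree equal to its weight, so vol(S) = x + y, and the cut is
   (x (d - y) + y (d - x)) / d.  The cut is symmetric under complementation,
   so we may assume vol(S) <= vol(V \ S), i.e. x + y <= d; then
   d (x + y) >= (x + y)^2 >= 4 x y, which is exactly 2 δ(S) >= x + y. *)
From mathcomp Require Import all_boot all_order all_algebra.
From mathcomp Require Import lra.
Set Implicit Arguments. Unset Strict Implicit. Unset Printing Implicit Defensive.
Import Order.TTheory GRing.Theory Num.Theory.
Local Open Scope ring_scope.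

Lemma cut_setC (R : fieldType) (n : nat) (w : vert n -> vert n -> R) :
  (forall u v, w u v = w v u) -> forall S, cut w (~: S) = cut w S.
Proof.
move=> wC S; rewrite /cut setCK exchange_big.
by apply: eq_bigr => u _; apply: eq_bigr => v _.
Qed.

Lemma cross_mass_ge (R : realFieldType) (x y d : R) :
  0 <= x -> 0 <= y -> x + y <= d ->
  (x + y) * d <= 2 * (x * (d - y) + y * (d - x)).
Proof.
move=> x0 y0 xyd.
have sqr_xy : 0 <= (x - y) * (x - y) by rewrite -expr2 sqr_ge0.
have slack : 0 <= (x + y) * (d - (x + y)) by apply: mulr_ge0; lra.
nra.
Qed.

Lemma psumr_gt0 (R : numDomainType) (I : finType) (f : I -> R) (i : I) :
  (forall j, 0 < f j) -> 0 < \sum_j f j.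
Proof.
move=> f_gt0; rewrite (bigD1 i) //= ltr_wpDr //.
by apply: sumr_ge0 => j _; apply: ltW.
Qed.

Section ProductGraph.
Variables (R : realFieldType) (n : nat) (a b : 'I_n -> R) (d : R).

Definition massA (T : {set vert n}) : R := \sum_(i | inl i \in T) a i.
Definition massB (T : {set vert n}) : R := \sum_(j | inr j \in T) b j.

Lemma Gw_sym u v : Gw a b d u v = Gw a b d v u.
Proof. by case: u v => [i|j] [i'|j']. Qed.

Lemma cut_Gw T :
  cut (Gw a b d) T = (massA T * massB (~: T) + massB T * massA (~: T)) / d.
Proof.
rewrite /cut big_sumType mulrDl /massA /massB !mulr_suml.
congr (_ + _); apply: eq_bigr => i _; rewrite big_sumType /= mulr_sumr mulr_suml.
- by rewrite big1_eq add0r.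
- by rewrite big1_eq addr0; apply: eq_bigr => j _; rewrite [b i * _]mulrC.
Qed.

Hypotheses (sum_a : \sum_i a i = d) (sum_b : \sum_i b i = d) (d_neq0 : d != 0).

Lemma wdeg_Gw u :
  wdeg (Gw a b d) u = match u with inl i => a i | inr j => b j end.
Proof.
rewrite /wdeg big_sumType; case: u => [i|j] /=.
- by rewrite big1_eq add0r -mulr_suml -mulr_sumr sum_b mulfK.
- by rewrite big1_eq addr0 -!mulr_suml sum_a [d * _]mulrC mulfK.
Qed.

Lemma vol_Gw T : vol (Gw a b d) T = massA T + massB T.
Proof.
by rewrite /vol big_sumType; congr (_ + _); apply: eq_bigr => ? _; rewrite wdeg_Gw.
Qed.

Lemma massA_setC T : massA (~: T) = d - massA T.
Proof.
rewrite -sum_a /massA [in RHS](bigID (fun i => inl i \in T)) /= addrC addrK.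
by apply: eq_bigl => i; rewrite in_setC.
Qed.

Lemma massB_setC T : massB (~: T) = d - massB T.
Proof.
rewrite -sum_b /massB [in RHS](bigID (fun j => inr j \in T)) /= addrC addrK.
by apply: eq_bigl => j; rewrite in_setC.
Qed.

Hypotheses (a_gt0 : forall i, 0 < a i) (b_gt0 : forall j, 0 < b j).

Lemma massA_ge0 T : 0 <= massA T.
Proof. by apply: sumr_ge0 => i _; apply: ltW. Qed.

Lemma massB_ge0 T : 0 <= massB T.
Proof. by apply: sumr_ge0 => j _; apply: ltW. Qed.

Lemma vol_Gw_gt0 T : T != set0 -> 0 < vol (Gw a b d) T.
Proof.
case/set0Pn=> u uT; rewrite /vol (bigD1 u) //= ltr_wpDr //.
- by apply: sumr_ge0 => v _; rewrite wdeg_Gw; case: v => ?; apply: ltW.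
- by rewrite wdeg_Gw; case: u uT.
Qed.

Lemma half_vol_le_cut T :
  vol (Gw a b d) T <= vol (Gw a b d) (~: T) ->
  vol (Gw a b d) T / 2 <= cut (Gw a b d) T.
Proof.
have d_gt0 : 0 < d by rewrite lt0r d_neq0 -sum_a sumr_ge0 // => i _; apply: ltW.
rewrite cut_Gw !vol_Gw massA_setC massB_setC ler_pdivlMr // => vol_le.
have mass_le : massA T + massB T <= d by lra.
have := cross_mass_ge (massA_ge0 T) (massB_ge0 T) mass_le.
nra.
Qed.

End ProductGraph.

Theorem lemma5p6 (R : realFieldType) (n : nat) (a b : 'I_n -> R) (d : R) :
  (forall i, 0 < a i) -> (forall i, 0 < b i) ->
  \sum_(i < n) `|a i| = d -> \sum_(i < n) `|b i| = d ->
  forall S : {set vert n}, S != set0 -> S != [set: vert n] ->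
  cut (Gw a b d) S / Num.min (vol (Gw a b d) S) (vol (Gw a b d) (~: S))
    >= 1 / 2.
Proof.
move=> a_gt0 b_gt0 norm_a norm_b.
have sum_a : \sum_i a i = d.
  by rewrite -norm_a; apply: eq_bigr => i _; rewrite gtr0_norm.
have sum_b : \sum_i b i = d.
  by rewrite -norm_b; apply: eq_bigr => j _; rewrite gtr0_norm.
move=> S S0 ST.
have d_neq0 : d != 0.
  by case/set0Pn: S0 => -[i|i] _; rewrite gt_eqF // -sum_a (psumr_gt0 i).
have vol_gt0 := vol_Gw_gt0 sum_a sum_b d_neq0 a_gt0 b_gt0.
wlog vol_le : S S0 ST / vol (Gw a b d) S <= vol (Gw a b d) (~: S).
  move=> hwlog.
  have [|vol_ge] := orP (le_total (vol (Gw a b d) S) (vol (Gw a b d) (~: S))).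
    exact: hwlog.
  have := hwlog (~: S); rewrite setCK (cut_setC (@Gw_sym _ _ a b d)) minC; apply=> //.
  - by rewrite -setCT (inj_eq (@setC_inj _)).
  - by rewrite -setC0 (inj_eq (@setC_inj _)).
rewrite (min_l vol_le) ler_pdivlMr ?vol_gt0 // mulrC mul1r.
exact: half_vol_le_cut.
Qed.
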